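(* Let $p$ be a prime number and let $x,y,z\in\mathbb{N}$ with $x\le y\le z$ satisfy $\frac{4}{p}=\frac{1}{x}+\frac{1}{y}+\frac{1}{z}$. Suppose the solution is of Type I, i.e. $\gcd(x,p)=1$, $\gcd(y,p)=1$ and $\gcd(z,p)=p$. Then $$x=\left\lceil \frac{yp}{4y-p}\right\rceil.$$
   Context: $\mathbb{N}$ denotes the positive integers; $\lceil\cdot\rceil$ is the ceiling function. *)

From mathcomp Require Import all_boot all_order all_algebra.
Set Implicit Arguments. Unset Strict Implicit. Unset Printing Implicit Defensive.

(* Write z = c p.  Clearing denominators gives (4c - 1) x y = c p (x + y); as
   p divides neither x nor y, p divides 4c - 1.  Hence
   x p <= (4c - 1) x <= 2 c p and 4 c x <= 2 c p + x, i.e. x <= 2c and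
   2x <= p + 1, so x (x - 1) < c p = z.
   The claimed value of x is equivalent to (x - 1)(4y - p) < y p <= x (4y - p).
   The right inequality is 1/x + 1/y < 4/p; multiplied by z, the left one
   becomes p x y + p z < 4 y z, which after a further multiplication by x and an
   application of the equation is exactly x (x - 1) < z. *)
From mathcomp Require Import all_boot all_order all_algebra.
From mathcomp Require Import zify ring.
Import Order.TTheory GRing.Theory Num.Theory.

Set Implicit Arguments.
Unset Strict Implicit.
Unset Printing Implicit Defensive.

Section TypeI.

Variables p x y c : nat.
Hypotheses (p_prime : prime p) (x_gt0 : 0 < x) (leq_xy : x <= y).
Hypotheses (coprime_xp : coprime x p) (coprime_yp : coprime y p).
Hypothesis egyptian_eq :
  4 * x * y * (c * p) = p * (y * (c * p) + x * (c * p) + x * y).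

Let p_gt0 : 0 < p := prime_gt0 p_prime.
Let y_gt0 : 0 < y := leq_trans x_gt0 leq_xy.

Lemma typeI_cofactor_gt0 : 0 < c.
Proof.
case: c egyptian_eq => // /eqP; rewrite !(muln0, mul0n, add0n) eq_sym.
by rewrite !muln_eq0 !eqn0Ngt p_gt0 x_gt0 y_gt0.
Qed.

Lemma typeI_cofactor_eq : (4 * c - 1) * (x * y) = c * p * (x + y).
Proof.
apply/eqP; rewrite -(eqn_pmul2r p_gt0); apply/eqP.
have: 4 * x * y * c * p = p * (y * c * p + x * c * p + x * y).
  by rewrite -mulnA egyptian_eq !mulnA.
have := typeI_cofactor_gt0; nia.
Qed.

Lemma typeI_prime_dvd_cofactor : p %| 4 * c - 1.
Proof.
have coprime_pxy : coprime p (x * y).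
  by rewrite coprimeMr ![coprime p _]coprime_sym coprime_xp coprime_yp.
rewrite -(Gauss_dvdl _ coprime_pxy) typeI_cofactor_eq -mulnA.
by rewrite dvdn_mull // dvdn_mulr.
Qed.

Lemma typeI_cofactor_bound : (4 * c - 1) * x <= 2 * c * p.
Proof.
rewrite -(leq_pmul2r y_gt0) -mulnA typeI_cofactor_eq.
have -> : 2 * c * p * y = c * p * (2 * y) by ring.
by apply: leq_mul => //; lia.
Qed.

Lemma typeI_small_x : x * (x - 1) < c * p.
Proof.
have c_gt0 := typeI_cofactor_gt0.
have le_p : p <= 4 * c - 1 by apply: dvdn_leq typeI_prime_dvd_cofactor; lia.
have bound := typeI_cofactor_bound.
have le_x2c : x <= 2 * c.
  rewrite -(leq_pmul2r p_gt0); apply: leq_trans bound.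
  by rewrite [x * p]mulnC leq_mul.
have le_2x : 2 * x <= p.+1.
  rewrite -(leq_pmul2l (_ : 0 < 2 * c)) //; nia.
nia.
Qed.

End TypeI.

Local Open Scope ring_scope.

Lemma egyptian3_nat_eq (R : numFieldType) (n p x y z : nat) :
  (0 < p)%N -> (0 < x)%N -> (0 < y)%N -> (0 < z)%N ->
  n%:R / p%:R = 1 / x%:R + 1 / y%:R + 1 / z%:R :> R ->
  (n * x * y * z = p * (y * z + x * z + x * y))%N.
Proof.
rewrite -!(ltr0n R) => p_gt0 x_gt0 y_gt0 z_gt0 eq_frac.
apply/eqP; rewrite -(eqr_nat R) !natrM !natrD !natrM; apply/eqP.
transitivity (p%:R * x%:R * y%:R * z%:R * (n%:R / p%:R) : R).
  by field; rewrite gt_eqF.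
by rewrite eq_frac; field; rewrite !gt_eqF.
Qed.

Lemma ceil_ratio (R : archiNumFieldType) (a b m : int) :
  0 < b -> (m - 1) * b < a <= m * b -> Num.ceil (a%:~R / b%:~R : R) = m.
Proof.
move=> b_gt0 bounds; apply: ceil_def.
by rewrite ltr_pdivlMr ?ler_pdivrMr ?ltr0z // -!intrM ltr_int ler_int.
Qed.

Lemma egyptian3_ceil_bounds (p x y z : nat) :
  (0 < p)%N -> (0 < x)%N -> (x <= y)%N -> (0 < z)%N ->
  (4 * x * y * z = p * (y * z + x * z + x * y))%N -> (x * (x - 1) < z)%N ->
  0 < 4 * y%:Z - p%:Z /\
  (x%:Z - 1) * (4 * y%:Z - p%:Z) < (y * p)%:Z <= x%:Z * (4 * y%:Z - p%:Z).
Proof.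
move=> p_gt0 x_gt0 le_xy z_gt0 egyptian_eq small_x.
have pxy_gt0 : (0 < p * x * y)%N.
  by rewrite !muln_gt0 p_gt0 x_gt0 (leq_trans x_gt0 le_xy).
have lt_sum : (p * (x + y) < 4 * x * y)%N.
  by rewrite -(ltn_pmul2l z_gt0); nia.
have lt_z : (p * x * y + p * z < 4 * y * z)%N.
  by rewrite -(ltn_pmul2l x_gt0); nia.
have lt_ceil : (4 * x * y + p < x * p + y * p + 4 * y)%N.
  by rewrite -(ltn_pmul2l z_gt0); lia.
split; first nia.
by apply/andP; split; lia.
Qed.

Theorem theorem2 (p x y z : nat) :
  prime p -> (0 < x)%N -> (x <= y)%N -> (y <= z)%N ->
  4%:R / p%:R = 1 / x%:R + 1 / y%:R + 1 / z%:R :> rat ->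
  gcdn x p = 1%N -> gcdn y p = 1%N -> gcdn z p = p ->
  x%:Z = Num.ceil ((y * p)%:R / (4 * y%:Z - p%:Z)%:~R : rat).
Proof.
move=> p_prime x_gt0 le_xy le_yz eq_frac /eqP coprime_xp /eqP coprime_yp gcd_zp.
have z_gt0 : (0 < z)%N by apply: leq_trans x_gt0 (leq_trans le_xy le_yz).
have p_gt0 := prime_gt0 p_prime.
have egyptian_eq := egyptian3_nat_eq p_gt0 x_gt0
  (leq_trans x_gt0 le_xy) z_gt0 eq_frac.
have /dvdnP [c def_z] : (p %| z)%N by rewrite -gcd_zp dvdn_gcdl.
have small_x : (x * (x - 1) < z)%N.
  rewrite def_z (typeI_small_x p_prime x_gt0 le_xy coprime_xp coprime_yp) //.
  by rewrite -def_z.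
have [b_gt0 bounds] :=
  egyptian3_ceil_bounds p_gt0 x_gt0 le_xy z_gt0 egyptian_eq small_x.
by rewrite -[(y * p)%:R]/(((y * p)%:Z)%:~R) (ceil_ratio _ b_gt0 bounds).
Qed.
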